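(* Let $K \subseteq L \subseteq M$ be a tower of fields of characteristic $2$ such that $L/K$ is Galois with group $\mathbb{Z}/3$ and $M/L$ is Galois with group $\mathbb{Z}/2$. Let $\sigma$ generate $\mathrm{Gal}(L/K)$. For $\ell \in L$ let $\overline{\ell}$ denote its image in $L/(F-1)L$, where $F$ is the Frobenius map $x\mapsto x^2$ (so $(F-1)L = \{x^2 - x : x \in L\}$). Suppose $M \cong L[x]/(x^2 - x - a)$ with $a \in L$, and let $d$ be the dimension of the $\mathbb{F}_2$-subspace of $L/(F-1)L$ spanned by $\overline{a}, \overline{\sigma(a)}, \overline{\sigma^2(a)}$. If $N$ is the Galois closure of $M$ over $K$, then $\mathrm{Gal}(N/K)$ is isomorphic to a semidirect product $(\mathbb{Z}/2)^d \rtimes \mathbb{Z}/3$. *)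

From HB Require Import structures.
From mathcomp Require Import all_boot all_order all_algebra all_fingroup all_solvable all_field.
Set Implicit Arguments. Unset Strict Implicit. Unset Printing Implicit Defensive.
Import GRing.Theory.
Local Open Scope ring_scope.

Section ArtinSchreier.
Variables (F : fieldType) (Om : fieldExtType F) (L : {subfield Om}).

Definition in_wpL (x : Om) : Prop := exists2 y, y \in L & x = y ^+ 2 - y.

(* F_2-linear combination of a finite family: sum of the members selected by c *)
Definition f2comb n (v : 'I_n -> Om) (c : 'I_n -> bool) : Om :=
  \sum_(i < n | c i) v i.

Definition in_span_modwp n (v : 'I_n -> Om) (x : Om) : Prop :=
  exists c : 'I_n -> bool, in_wpL (x - f2comb v c).

Definition indep_modwp n (v : 'I_n -> Om) : Prop :=
  forall c : 'I_n -> bool, in_wpL (f2comb v c) -> forall i, c i = false.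

(* The F_2-subspace of L/(F-1)L spanned by the classes of v (elements of L)
   has dimension d: it admits a basis of d classes (of elements of L). *)
Definition span_dim_modwp n (v : 'I_n -> Om) (d : nat) : Prop :=
  exists w : 'I_d -> Om,
    [/\ forall i, w i \in L,
        indep_modwp w,
        forall i, in_span_modwp v (w i)
      & forall j, in_span_modwp w (v j)].

End ArtinSchreier.

Definition galois_closure (F : fieldType) (Om : splittingFieldType F)
    (K M N : {subfield Om}) : Prop :=
  [/\ (M <= N)%VS, galois K N &
      forall N' : {subfield Om}, (M <= N')%VS -> galois K N' -> (N <= N')%VS].

From HB Require Import structures.
From mathcomp Require Import all_boot all_order all_algebra all_fingroup all_solvable all_field.
From mathcomp Require Import ring.
Import GRing.Theory.
Set Implicit Arguments. Unset Strict Implicit. Unset Printing Implicit Defensive.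
Local Open Scope ring_scope.

(* Write wp x = x^2 - x.  Every K-conjugate g alpha of alpha is a root of
   wp x = g a, and g a runs through the Gal(L/K)-orbit a, sigma a, sigma^2 a.
   Hence N is generated over L by roots r_j of wp x = w_j, where the w_j lift a
   basis of the span of the classes of that orbit in L/wp(L).  As these classes
   are independent, each adjunction is an Artin-Schreier extension of degree 2,
   so [N : L] = 2^d.  An element t of Gal(N/L) moves each conjugate of alpha by
   0 or 1, and is determined by these moves, since an element fixing all
   conjugates lies in the core of Gal(N/M), which is trivial for the Galois
   closure; so Gal(N/L) is elementary abelian.  Being normal of index 3 and of
   order prime to 3, it is complemented by any subgroup of order 3. *)

Definition wp (R : comNzRingType) (x : R) := x ^+ 2 - x.

Lemma rpred_wp (R : comNzRingType) (S : subringClosed R) x :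
  x \in S -> wp x \in S.
Proof. by move=> Sx; rewrite rpredB ?rpredX. Qed.

Section CharTwo.
Variable R : comNzRingType.
Hypothesis pcharR2 : 2 \in [pchar R].

Lemma wp0 : wp (0 : R) = 0.
Proof. by rewrite /wp expr2 mul0r subrr. Qed.

Lemma wpD (x y : R) : wp (x + y) = wp x + wp y.
Proof. by rewrite /wp sqrrD (mulrn_pchar pcharR2) addr0 opprD addrACA. Qed.

Lemma wpB (x y : R) : wp (x - y) = wp x - wp y.
Proof. by rewrite !(oppr_pchar2 pcharR2) wpD. Qed.

End CharTwo.

Section CharTwoDomain.
Variable R : idomainType.
Hypothesis pcharR2 : 2 \in [pchar R].

Lemma wp_eq0 (x : R) : (wp x == 0) = (x == 0) || (x == 1).
Proof.
have -> : wp x = x * (x - 1) by rewrite mulrBr mulr1 -expr2.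
by rewrite mulf_eq0 subr_eq0.
Qed.

Lemma eq_wp_cases (x y : R) : wp x = wp y -> y = x \/ y = x + 1.
Proof.
move=> /esym/eqP; rewrite -subr_eq0 -wpB // wp_eq0 subr_eq0 subr_eq.
by rewrite addrC; case/orP=> /eqP ->; [left | right].
Qed.

End CharTwoDomain.

Section ArtinSchreierExtension.
Variables (F : fieldType) (Om : fieldExtType F).
Hypothesis pcharOm2 : 2 \in [pchar Om].

Lemma wp_f2comb n (v : 'I_n -> Om) c :
  wp (f2comb v c) = f2comb (fun i => wp (v i)) c.
Proof. exact: (big_morph _ (wpD pcharOm2) (wp0 _)). Qed.

Lemma f2comb_toggle n (v : 'I_n -> Om) c j :
  f2comb v (fun i => c i (+) (i == j)) = f2comb v c + v j.
Proof.
rewrite /f2comb; have -> : v j = \sum_(i | i == j) v i by rewrite big_pred1_eq.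
rewrite big_mkcond [in RHS]big_mkcond [X in _ = _ + X]big_mkcond -big_split /=.
apply: eq_bigr => i _.
by case: (c i); case: (i == j); rewrite /= ?addr0 ?add0r ?addrr_pchar2.
Qed.

Lemma adjoin_degree_wp (E : {subfield Om}) g :
  wp g \in E -> (adjoin_degree E g <= 2)%N.
Proof.
move=> gE; pose q : {poly Om} := 'X^2 - 'X - (wp g)%:P.
have qE : q \is a polyOver E.
  by rewrite !rpredB ?polyOverXn ?polyOverX ?polyOverC.
have q_g : root q g by rewrite /root /q !hornerE subrr.
have size_q : size q = 3%N.
  by rewrite /q -addrA size_polyDl ?size_polyXn // -opprD size_polyN size_XaddC.
have q_neq0 : q != 0 by rewrite -size_poly_eq0 size_q.
by rewrite -ltnS -size_minPoly -size_q dvdp_leq // minPoly_dvdp.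
Qed.

Lemma dim_Fadjoin_wp (E : {subfield Om}) g :
  wp g \in E -> g \notin E -> \dim <<E; g>> = (2 * \dim E)%N.
Proof.
move=> gE; rewrite -adjoin_deg_eq1 dim_Fadjoin => ngE; congr (_ * _)%N.
(* adjoin_degree is defined as a successor k.+1. *)
have := adjoin_degree_wp gE; rewrite /adjoin_degree in ngE *.
by case: (_.-1) ngE => [|[|[|]]].
Qed.

Lemma mem_Fadjoin_wp (E : {subfield Om}) g y :
  wp g \in E -> y \in <<E; g>>%VS ->
  exists2 u, u \in E & exists2 v, v \in E & y = u + v * g.
Proof.
move=> gE yEg; pose p := Fadjoin_poly E g y.
have size_p : (size p <= 2)%N.
  exact: leq_trans (size_Fadjoin_poly _ _ _) (adjoin_degree_wp gE).
have pE : p \is a polyOver E := Fadjoin_polyOver E g y.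
exists p`_0; first exact/polyOverP.
exists p`_1; first exact/polyOverP.
rewrite -(Fadjoin_poly_eq yEg) (horner_coef_wide _ size_p).
by rewrite !big_ord_recl big_ord0 addr0 expr0 mulr1 expr1.
Qed.

Lemma in_wpL_Fadjoin (E : {subfield Om}) g b :
  wp g \in E -> b \in E -> in_wpL <<E; g>>%AS b ->
  in_wpL E b \/ in_wpL E (b - wp g).
Proof.
(* With y = u + v g, wp y = wp u + v^2 wp g + (wp v) g, so g \notin E forces
   wp v = 0, i.e. v = 0 or v = 1. *)
move=> gE bE [y /(mem_Fadjoin_wp gE)[u uE [v vE ->]] Db].
have [g_in_E | g_notin_E] := boolP (g \in E).
  by left; exists (u + v * g); rewrite ?rpredD ?rpredM.
have {}Db : b = wp u + v ^+ 2 * wp g + wp v * g.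
  by have := wpD pcharOm2 u (v * g); rewrite Db /wp => ->; ring.
have wp_v : wp v = 0.
  apply/eqP; apply: contraR g_notin_E => nz.
  have -> : g = (b - (wp u + v ^+ 2 * wp g)) / wp v.
    by rewrite Db addrC addKr mulrC mulKf.
  by rewrite rpred_div ?rpred_wp // rpredB // rpredD ?rpred_wp // rpredM ?rpredX.
rewrite Db wp_v mul0r addr0.
move/eqP: wp_v; rewrite wp_eq0 // => /orP[/eqP-> | /eqP->]; [left | right].
  by exists u; rewrite // expr0n mul0r addr0.
by exists u; rewrite // expr1n mul1r addrK.
Qed.

Section AdjoinRoots.
Variables (E : {subfield Om}) (n : nat) (w r : 'I_n -> Om).
Hypotheses (wE : forall i, w i \in E) (wp_r : forall i, wp (r i) = w i).

Lemma in_wpL_adjoin_roots (s : seq 'I_n) b :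
  b \in E -> in_wpL <<E & map r s>>%AS b ->
  exists2 c : 'I_n -> bool,
    (forall i, c i -> i \in s) & in_wpL E (b - f2comb w c).
Proof.
elim/last_ind: s b => [|s j IHs] b bE [y].
  rewrite /= adjoin_nil subfield_closed => yE Db.
  by exists (fun => false) => //; exists y; rewrite // /f2comb big_pred0_eq subr0.
rewrite map_rcons /= adjoin_rcons => yT Db.
have sET : (E <= <<E & map r s>>%AS)%VS := subv_adjoin_seq _ _.
have wp_rj : wp (r j) \in <<E & map r s>>%AS by rewrite wp_r (subvP sET).
have [bT | bjT] := in_wpL_Fadjoin wp_rj (subvP sET _ bE)
                     (ex_intro2 _ _ y yT Db).
  have [c cs cE] := IHs b bE bT.
  by exists c => // i /cs; rewrite mem_rcons in_cons orbC => ->.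
rewrite wp_r in bjT; have [c cs cE] := IHs _ (rpredB bE (wE j)) bjT.
exists (fun i => c i (+) (i == j)).
  move=> i; rewrite mem_rcons in_cons.
  by case: (i == j) => //=; rewrite addbF => /cs.
by rewrite f2comb_toggle // opprD addrA addrAC.
Qed.

Lemma in_span_modwp_wp b :
  in_span_modwp E w b -> exists c, exists2 y, y \in E & b = wp (f2comb r c + y).
Proof.
move=> [c [y yE Db]]; exists c, y => //.
rewrite wpD //; have -> : wp (f2comb r c) = f2comb w c.
  by rewrite wp_f2comb //; apply: eq_bigr => i _.
by rewrite /wp -Db addrC subrK.
Qed.

Lemma dim_adjoin_roots (s : seq 'I_n) :
  indep_modwp E w -> uniq s -> \dim <<E & map r s>> = (2 ^ size s * \dim E)%N.
Proof.
move=> indep; elim/last_ind: s => [|s j IHs].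
  by rewrite /= adjoin_nil subfield_closed mul1n.
rewrite rcons_uniq => /andP[j_notin_s uniq_s].
have wp_rj : wp (r j) \in <<E & map r s>>%AS.
  by rewrite wp_r (subvP (subv_adjoin_seq _ _)).
rewrite map_rcons adjoin_rcons (dim_Fadjoin_wp wp_rj) ?IHs //.
  by rewrite size_rcons expnS mulnA.
apply/negP => rjT.
have [c cs [y yE Dy]] :=
  in_wpL_adjoin_roots (wE j) (ex_intro2 _ _ (r j) rjT (esym (wp_r j))).
have cj : c j = false := contraNF (@cs j) j_notin_s.
have /(_ _ j) := indep (fun i => c i (+) (i == j)).
rewrite f2comb_toggle // addrC -[f2comb w c](oppr_pchar2 pcharOm2) cj eqxx.
by move/(_ (ex_intro2 _ _ y yE Dy)).
Qed.

End AdjoinRoots.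

End ArtinSchreierExtension.

Section PrimeIndexComplement.
Variable gT : finGroupType.
Local Open Scope group_scope.

Lemma sdprod_prime_index (G H : {group gT}) p :
  prime p -> H <| G -> #|G : H| = p -> coprime #|H| p ->
  exists Q : {group gT}, H ><| Q = G /\ Q \isog Zp p.
Proof.
move=> p_pr nsHG iHG coHp; have [sHG nHG] := andP nsHG.
have p_dvd_G : (p %| #|G|)%N by rewrite -(Lagrange sHG) iHG dvdn_mull.
have [x xG ox] := Cauchy p_pr p_dvd_G.
exists <[x]>%G; split; last by rewrite -ox isog_sym Zp_isog.
have tiHx : H :&: <[x]> = 1 by apply: coprime_TIg; rewrite -orderE ox.
rewrite sdprodE ?(subset_trans _ nHG) ?cycle_subG //.
apply/eqP; rewrite eqEcard mul_subG ?cycle_subG //=.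
by rewrite (TI_cardMg tiHx) -orderE ox -iHG Lagrange.
Qed.

End PrimeIndexComplement.

Section GaloisClosure.
Variables (F : fieldType) (Om : splittingFieldType F).
Local Open Scope group_scope.

Lemma gal_invK (E : {subfield Om}) (x : gal_of E) y :
  y \in E -> x^-1 (x y) = y.
Proof. by move=> Ey; rewrite -galM // mulgV gal_id. Qed.

Lemma galJV (E : {subfield Om}) (t x : gal_of E) y :
  y \in E -> (t ^ x^-1) y = x^-1 (t (x y)).
Proof. by move=> Ey; rewrite conjgE invgK !galM ?memv_gal. Qed.

Lemma mem_gal_Fadjoin (E L : {subfield Om}) x (u : gal_of E) :
  (L <= E)%VS -> x \in E -> {in L, forall y, u y = y} -> u x = x ->
  u \in 'Gal(E / <<L; x>>).
Proof.
move=> sLE xE fixL fixx; have sLxE : (<<L; x>> <= E)%VS by apply/FadjoinP.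
rewrite -sub1set (galois_connection _ sLxE); apply/FadjoinP; split.
  apply/subvP => y yL; apply/(fixedFieldP (subvP sLE _ yL)) => v /set1P->.
  exact: fixL.
by apply/(fixedFieldP xE) => v /set1P->.
Qed.

Lemma gcore_galois_closure (K M N : {subfield Om}) :
  (K <= M)%VS -> galois_closure K M N -> gcore 'Gal(N / M) 'Gal(N / K) = 1.
Proof.
move=> sKM [sMN galKN minN].
have nsCG : gcore 'Gal(N / M) 'Gal(N / K) <| 'Gal(N / K).
  exact/gcore_normal/galS.
have sMC : (M <= fixedField (gcore 'Gal(N / M) 'Gal(N / K)))%VS.
  by rewrite -(galois_connection _ sMN) gcore_sub.
have sNC := minN _ sMC (normal_fixedField_galois galKN nsCG).
apply/trivgP/subsetP => t Ct; rewrite inE; apply/gal_eqP => y yN.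
by rewrite gal_id; have [_ ->] := mem_fixedFieldP (subvP sNC y yN).
Qed.

End GaloisClosure.

Section GaloisClosureOfArtinSchreierExtension.
Variables (F : fieldType) (Om : splittingFieldType F) (K L M N : {subfield Om}).
Variables (sigma : gal_of L) (a alpha : Om) (d : nat).
Hypotheses (pcharF2 : 2 \in [pchar F]) (sKL : (K <= L)%VS) (sLM : (L <= M)%VS).
Hypotheses (galKL : galois K L) (isoKL : ('Gal(L / K) \isog Zp 3)%g).
Hypotheses (gen_sigma : <[sigma]>%g = 'Gal(L / K)%g) (aL : a \in L).
Hypotheses (alpha_root : alpha ^+ 2 - alpha - a = 0) (defM : M = <<L; alpha>>%AS).
Hypothesis closureN : galois_closure K M N.

Local Notation orbit_a := [ffun i : 'I_3 => (sigma ^+ i)%g a].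

Let pcharOm2 : 2 \in [pchar Om]. Proof. by rewrite pchar_lalg. Qed.
Let sMN : (M <= N)%VS. Proof. by case: closureN. Qed.
Let galKN : galois K N. Proof. by case: closureN. Qed.
Let sLN : (L <= N)%VS := subv_trans sLM sMN.
Let sKLN : (K <= L <= N)%VS. Proof. by rewrite sKL sLN. Qed.
Let normalKL : normalField K L. Proof. by case/and3P: galKL. Qed.
Let alphaN : alpha \in N.
Proof. by rewrite (subvP sMN) // defM memv_adjoin. Qed.

Lemma wp_gal_alpha (g : gal_of N) : wp (g alpha) = g a.
Proof.
rewrite /wp -rmorphXn -rmorphB; congr (g _).
by apply/eqP; rewrite -subr_eq0 alpha_root.
Qed.

Lemma normal_memv_gal g x : g \in 'Gal(N / K)%g -> x \in L -> g x \in L.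
Proof.
by move=> gG xL; rewrite -(normalField_cast_eq sKLN normalKL gG xL) memv_gal.
Qed.

Lemma gal_orbit g :
  g \in 'Gal(N / K)%g -> exists i : 'I_3, g a = (sigma ^+ i)%g a.
Proof.
move=> gG; have : normalField_cast L g \in 'Gal(L / K)%g.
  by rewrite -(normalField_img galKN sKLN normalKL) mem_morphim.
rewrite -gen_sigma => /cyclePmin[i]; rewrite [#[_]%g]orderE gen_sigma.
rewrite (card_isog isoKL) card_Zp // => lti3 Dg.
by exists (Ordinal lti3); rewrite -(normalField_cast_eq sKLN normalKL gG aL) Dg.
Qed.

Lemma gal_orbit_lift (i : 'I_3) :
  exists g, g \in 'Gal(N / K)%g /\ g a = (sigma ^+ i)%g a.
Proof.
have : (sigma ^+ i)%g \in 'Gal(L / K)%g by rewrite -gen_sigma mem_cycle.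
rewrite -(normalField_img galKN sKLN normalKL) => /morphimP[g _ gG ->].
by exists g; rewrite (normalField_cast_eq sKLN normalKL gG aL).
Qed.

Lemma gal_fix_conjugates t :
  t \in 'Gal(N / L)%g ->
  (forall g, g \in 'Gal(N / K)%g -> t (g alpha) = g alpha) -> t = 1%g.
Proof.
(* t lies in every conjugate of Gal(N/M), hence in its core. *)
move=> tH fix_t; suff : t \in gcore 'Gal(N / M)%g 'Gal(N / K)%g.
  by rewrite (gcore_galois_closure (subv_trans sKL sLM) closureN) inE => /eqP.
apply/bigcapP => x xG; rewrite mem_conjg defM.
apply: mem_gal_Fadjoin => // [y yL|]; last by rewrite galJV // fix_t // gal_invK.
have yN := subvP sLN y yL.
by rewrite galJV // (fixed_gal sLN tH (normal_memv_gal xG yL)) gal_invK.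
Qed.

Lemma gal_eq_on_conjugates x y :
  x \in 'Gal(N / L)%g -> y \in 'Gal(N / L)%g ->
  (forall g, g \in 'Gal(N / K)%g -> x (g alpha) = y (g alpha)) -> x = y.
Proof.
move=> xH yH xy; apply/eqP; rewrite eq_mulgV1; apply/eqP/gal_fix_conjugates.
  by rewrite groupM ?groupV.
by move=> g gG; rewrite galM ?memv_gal // xy // gal_invK ?memv_gal.
Qed.

Lemma gal_conj_cases t g :
  t \in 'Gal(N / L)%g -> g \in 'Gal(N / K)%g ->
  t (g alpha) = g alpha \/ t (g alpha) = g alpha + 1.
Proof.
move=> tH gG; apply: eq_wp_cases => //.
have -> : wp (t (g alpha)) = t (wp (g alpha)) by rewrite /wp rmorphB rmorphXn.
by rewrite wp_gal_alpha (fixed_gal sLN tH (normal_memv_gal gG aL)).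
Qed.

Lemma abelem_galNL : (2.-abelem 'Gal(N / L))%g.
Proof.
have gal1 (t : gal_of N) z : t (z + 1) = t z + 1 by rewrite rmorphD rmorph1.
apply/abelemP => //; split.
  apply/centsP => x xH y yH; apply: gal_eq_on_conjugates; rewrite ?groupM //.
  move=> g gG; rewrite !galM ?memv_gal //.
  by case: (gal_conj_cases xH gG) => ex; case: (gal_conj_cases yH gG) => ey;
    rewrite ?ex ?ey ?gal1 ?ex ?ey.
move=> x xH; apply: gal_eq_on_conjugates; rewrite ?groupX ?group1 // => g gG.
rewrite expgS expg1 galM ?memv_gal // gal_id.
case: (gal_conj_cases xH gG) => ex; rewrite ex ?gal1 ex //.
by rewrite -addrA addrr_pchar2 ?addr0.
Qed.

Lemma index_galNL : #|'Gal(N / K) : 'Gal(N / L)|%g = 3%N.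
Proof.
rewrite -card_quotient ?normal_norm ?normalField_normal //.
rewrite (card_isog (normalField_isog galKN sKLN normalKL)).
by rewrite (card_isog isoKL) card_Zp.
Qed.

Section Basis.
Variable w : 'I_d -> Om.
Hypotheses (wL : forall j, w j \in L) (indep_w : indep_modwp L w).
Hypotheses (w_in_span : forall j, in_span_modwp L orbit_a (w j)).
Hypotheses (orbit_in_span : forall i, in_span_modwp L w (orbit_a i)).

Lemma wp_roots_basis :
  exists r : 'I_d -> Om, (forall j, r j \in N) /\ (forall j, wp (r j) = w j).
Proof.
have /fin_all_exists[g Hg] := gal_orbit_lift.
have wp_conj i : wp (g i alpha) = orbit_a i.
  by rewrite wp_gal_alpha ffunE (proj2 (Hg i)).
have /fin_all_exists[r Hr] : forall j, exists x, x \in N /\ wp x = w j.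
  move=> j.
  have [c [y yL ->]] := in_span_modwp_wp pcharOm2 wp_conj (w_in_span j).
  exists (f2comb (fun i => g i alpha) c + y); split => //.
  by rewrite rpredD ?(subvP sLN _ yL) // rpred_sum // => i _; apply: memv_gal.
by exists r; split => j; have [] := Hr j.
Qed.

Section Roots.
Variable r : 'I_d -> Om.
Hypotheses (rN : forall j, r j \in N) (wp_r : forall j, wp (r j) = w j).

Local Notation Nr := <<L & map r (enum 'I_d)>>%AS.

Lemma conj_mem_adjoin_roots g : g \in 'Gal(N / K)%g -> g alpha \in Nr.
Proof.
move=> gG; have [i gi] := gal_orbit gG.
have [c [y yL Dv]] := in_span_modwp_wp pcharOm2 wp_r (orbit_in_span i).
have sNr : f2comb r c + y \in Nr.
  rewrite rpredD ?(subvP (subv_adjoin_seq _ _) _ yL) // rpred_sum // => j _.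
  by apply: seqv_sub_adjoin; rewrite map_f ?mem_enum.
have : wp (f2comb r c + y) = wp (g alpha) by rewrite wp_gal_alpha gi -Dv ffunE.
by case/(eq_wp_cases pcharOm2) => ->; last rewrite rpredD ?rpred1.
Qed.

Lemma adjoin_roots_eq : Nr = N :> {vspace Om}.
Proof.
have sNrN : (Nr <= N)%VS.
  by apply/Fadjoin_seqP; split => // _ /mapP[j _ ->].
have galNrN : galois Nr N.
  by apply: galoisS galKN; rewrite sNrN (subv_trans sKL) ?subv_adjoin_seq.
apply/eqP; rewrite eqEsubv sNrN; move/galois_fixedField: galNrN => <-.
apply/subvP => y yN; apply/(fixedFieldP yN) => t tG.
suff -> : t = 1%g by rewrite gal_id.
apply: gal_fix_conjugates => [|g gG].
  exact: subsetP (galS N (subv_adjoin_seq _ _)) t tG.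
exact: fixed_gal sNrN tG (conj_mem_adjoin_roots gG).
Qed.

End Roots.

Lemma card_galNL : #|'Gal(N / L)%g| = (2 ^ d)%N.
Proof.
have [r [rN wp_r]] := wp_roots_basis.
rewrite -(galois_dim (galoisS sKLN galKN)) -(adjoin_roots_eq rN wp_r).
rewrite (dim_adjoin_roots pcharOm2 wL wp_r) ?enum_uniq //.
by rewrite size_enum_ord mulnK ?adim_gt0.
Qed.

End Basis.

Lemma galois_closure_sdprod :
  span_dim_modwp L orbit_a d ->
  exists P Q : {group gal_of N},
    [/\ (P ><| Q)%g = 'Gal(N / K)%g, (2.-abelem P)%g, #|P| = (2 ^ d)%N
      & (Q \isog Zp 3)%g].
Proof.
move=> [w [wL indep_w w_in_span orbit_in_span]].
have card_H := card_galNL wL indep_w w_in_span orbit_in_span.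
have coprime_H3 : coprime #|'Gal(N / L)%g| 3 by rewrite card_H coprimeXl.
have [Q [sdprod_HQ isoQ]] := sdprod_prime_index (isT : prime 3)
  (normalField_normal sKLN normalKL) index_galNL coprime_H3.
by exists 'Gal(N / L)%G, Q; split; rewrite ?abelem_galNL.
Qed.

End GaloisClosureOfArtinSchreierExtension.

Theorem mainTheorem3 (F : fieldType) (Om : splittingFieldType F)
    (K L M N : {subfield Om}) (sigma : gal_of L) (a alpha : Om) (d : nat) :
  2 \in [pchar F] ->
  (K <= L)%VS -> (L <= M)%VS ->
  galois K L -> ('Gal(L / K) \isog Zp 3)%g ->
  galois L M -> ('Gal(M / L) \isog Zp 2)%g ->
  <[sigma]>%g = 'Gal(L / K)%g ->
  a \in L -> alpha ^+ 2 - alpha - a = 0 -> M = <<L; alpha>>%AS ->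
  span_dim_modwp L [ffun i : 'I_3 => (sigma ^+ i)%g a] d ->
  galois_closure K M N ->
  exists P Q : {group gal_of N},
    [/\ (P ><| Q)%g = 'Gal(N / K)%g,
        (2.-abelem P)%g, #|P| = (2 ^ d)%N
      & (Q \isog Zp 3)%g].
Proof.
move=> pcharF2 sKL sLM galKL isoKL _ _ gen_sigma aL alpha_root defM span_d
  closureN.
exact: galois_closure_sdprod pcharF2 sKL sLM galKL isoKL gen_sigma aL alpha_root
  defM closureN span_d.
Qed.
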